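(* Consider the reputation-based proportional-share reverse auction with ex-post payments described in the context, with budget $B>0$, worker set $U$, arbitrary bids $b_i\ge 0$, reputations $Re_i\in(0,1]$ and internal reputations $re_i\in[0,1]$. Then the total payment does not exceed the budget: $\sum_{i\in U}p_i=\sum_{i\in S}p_i\le B$.
   Context: Setting. A task publisher with budget $B>0$ faces a finite set $U$ of workers. Each worker $i\in U$ has a public accumulated reputation $Re_i\in(0,1]$ and submits a sealed bid $b_i\ge 0$. After the task, each selected worker $i$ receives an internal reputation $re_i\in[0,1]$. Mechanism. (1) Sort the workers so that $\frac{b_1}{Re_1}\le\dots\le\frac{b_{|U|}}{Re_{|U|}}$ (ties broken arbitrarily). (2) Starting with $S=\emptyset$ and $i=1$, while $i\le|U|$ and $\frac{b_i}{Re_i}\le \frac{B}{Re_i+\sum_{j\in S}Re_j}$, set $S=S\cup\{i\}$ and $i=i+1$. Let $k=|S|$. (3) Define $\rho^*=\min\left(\frac{b_{k+1}}{Re_{k+1}},\frac{B}{\sum_{j\in S}Re_j}\right)$ (with $\frac{b_{k+1}}{Re_{k+1}}:=+\infty$ if $k=|U|$). (4) Every $i\notin S$ is paid $p_i=0$; every $i\in S$ has $p_i^{up}=Re_i\rho^*$. (5) After the task, each $i\in S$ gets $p_i'=\max\left(\frac{B\, re_i}{\sum_{j\in S}re_j},\ \rho^* re_i\right)$ and final payment $p_i=\min(p_i^{up},p_i')$. *)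

(* Workers are indexed 0..n-1 in the sorted order of step (1). *)
From HB Require Import structures.
From mathcomp Require Import all_boot all_order all_algebra.
Set Implicit Arguments. Unset Strict Implicit. Unset Printing Implicit Defensive.
Import Order.TTheory GRing.Theory Num.Theory.
Local Open Scope ring_scope.

Section Mechanism.
Variables (R : realFieldType) (n : nat) (B : R) (b Re re : nat -> R).

(* Acceptance test of step (2) for worker i, given S = {0,...,i-1}. *)
Definition accept (i : nat) : bool :=
  b i / Re i <= B / (Re i + \sum_(j < i) Re j).

(* k = |S|: the loop stops at the first index failing the test (or at n). *)
Definition nwin : nat := find (fun i => ~~ accept i) (iota 0 n).

Definition sumReS : R := \sum_(j < nwin) Re j.
Definition sumreS : R := \sum_(j < nwin) re j.

Definition rho_star : R :=
  if (nwin < n)%N then Num.min (b nwin / Re nwin) (B / sumReS) else B / sumReS.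

Definition p_up (i : nat) : R := Re i * rho_star.
Definition p_post (i : nat) : R :=
  Num.max (B * re i / sumreS) (rho_star * re i).

Definition payment (i : nat) : R :=
  if (i < nwin)%N then Num.min (p_up i) (p_post i) else 0.

End Mechanism.

From HB Require Import structures.
From mathcomp Require Import all_boot all_order all_algebra.
Import Order.TTheory GRing.Theory Num.Theory.
Local Open Scope ring_scope.

(* Losers are paid nothing, and the final payment of a winner never exceeds
   its upper bound [Re i * rho_star].  Since
   [rho_star <= B / sum_(j in S) Re j], the upper bounds of the winners add up
   to at most [B]. *)

Lemma ler_mul_of_ler_pdiv (F : numFieldType) (x y z : F) :
  0 <= z -> 0 <= y -> x <= y / z -> z * x <= y.
Proof.
rewrite le_eqVlt => /predU1P[<- y_ge0 _|z_gt0 _]; first by rewrite mul0r.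
by rewrite ler_pdivlMr // mulrC.
Qed.

Section BudgetFeasibility.
Variables (R : realFieldType) (n : nat) (B : R) (b Re re : nat -> R).

Local Notation k := (nwin n B b Re).

Lemma nwin_le : (k <= n)%N.
Proof.
by have := find_size (fun i => ~~ accept B b Re i) (iota 0 n); rewrite size_iota.
Qed.

Lemma payment_loser i : (k <= i)%N -> payment n B b Re re i = 0.
Proof. by rewrite /payment leqNgt => /negbTE->. Qed.

Lemma sum_payment_winners :
  \sum_(i < n) payment n B b Re re i = \sum_(i < k) payment n B b Re re i.
Proof.
rewrite -!(big_mkord xpredT) (big_cat_nat (leq0n k) nwin_le) /=.
suff -> : \sum_(k <= i < n) payment n B b Re re i = 0 by rewrite addr0.
by rewrite big_nat_cond big1 // => i /andP[/andP[/payment_loser]].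
Qed.

Lemma payment_le_p_up i : (i < k)%N -> payment n B b Re re i <= p_up n B b Re i.
Proof. by rewrite /payment => ->; rewrite ge_min lexx. Qed.

Lemma rho_star_le : rho_star n B b Re <= B / sumReS n B b Re.
Proof. by rewrite /rho_star; case: ifP => // _; rewrite ge_min lexx orbT. Qed.

Lemma sum_p_up_winners :
  \sum_(i < k) p_up n B b Re i = sumReS n B b Re * rho_star n B b Re.
Proof. by rewrite /p_up -mulr_suml. Qed.

Lemma sumReS_ge0 : (forall i, (i < n)%N -> 0 <= Re i) -> 0 <= sumReS n B b Re.
Proof.
move=> Re_ge0; apply: sumr_ge0 => i _.
exact/Re_ge0/(leq_trans (ltn_ord i) nwin_le).
Qed.

End BudgetFeasibility.

Theorem theorem2 (R : realFieldType) (n : nat) (B : R) (b Re re : nat -> R) :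
  0 < B ->
  (forall i, (i < n)%N -> 0 <= b i) ->
  (forall i, (i < n)%N -> 0 < Re i <= 1) ->
  (forall i, (i < n)%N -> 0 <= re i <= 1) ->
  (forall i j, (i <= j)%N -> (j < n)%N -> b i / Re i <= b j / Re j) ->
  \sum_(i < n) payment n B b Re re i
    = \sum_(i < nwin n B b Re) payment n B b Re re i
  /\ \sum_(i < nwin n B b Re) payment n B b Re re i <= B.
Proof.
move=> B_gt0 _ Re_bounds _ _.
split; first exact: sum_payment_winners.
have Re_ge0 i : (i < n)%N -> 0 <= Re i by move=> /Re_bounds /andP[/ltW].
apply: (le_trans (y := \sum_(i < nwin n B b Re) p_up n B b Re i)).
  by apply: ler_sum => i _; exact: payment_le_p_up.
rewrite sum_p_up_winners ler_mul_of_ler_pdiv ?sumReS_ge0 ?rho_star_le //.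
exact: ltW.
Qed.
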